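(* Let $q$ be a prime power and let $\mathcal W(5,q)$ be the symplectic polar space of ${\rm PG}(5,q)$ defined by the alternating form with Gram matrix $\begin{pmatrix} 0_3 & I_3\\ -I_3 & 0_3\end{pmatrix}$. Let $\Pi_1=\langle U_4,U_5,U_6\rangle$, $\Pi_2=\langle U_1,U_2,U_3\rangle$, and let $\Pi_3$ be a plane of $\mathcal W(5,q)$ (a generator) disjoint from both $\Pi_1$ and $\Pi_2$. Then all $q+1$ planes of the Segre variety $\Sigma_{1,2}$ of ${\rm PG}(5,q)$ determined by $\Pi_1,\Pi_2,\Pi_3$ are generators of $\mathcal W(5,q)$.
   Context: $U_i$ is the point with $1$ in position $i$ and $0$ elsewhere. The Segre variety $\Sigma_{1,2}\subset{\rm PG}(5,q)$ is the image of ${\rm PG}(1,q)\times{\rm PG}(2,q)$ under $((x_1,x_2),(y_1,y_2,y_3))\mapsto(x_iy_j)$; it contains a ruling of $q+1$ pairwise disjoint planes, and three mutually disjoint planes of ${\rm PG}(5,q)$ lie in the plane ruling of a unique such Segre variety, which is the one ''determined'' by them; the ''$q+1$ planes of $\Sigma_{1,2}$'' are the planes of this ruling. *)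

From HB Require Import structures.
From mathcomp Require Import all_boot all_order all_algebra all_field.
Set Implicit Arguments. Unset Strict Implicit. Unset Printing Implicit Defensive.
Import GRing.Theory.
Local Open Scope ring_scope.

(* Points of PG(5,q) = 1-dim subspaces of F^6 (row vectors 'rV[F]_6);
   a plane of PG(5,q) = a 3-dim subspace, given as the row space of a
   3 x 6 matrix of rank 3. *)

Definition symJ (F : fieldType) : 'M[F]_(3 + 3) :=
  block_mx 0 1%:M (- 1%:M) 0.

Definition symform (F : fieldType) (u v : 'rV[F]_(3 + 3)) : F :=
  (u *m symJ F *m v^T) 0 0.

Definition is_generator (F : fieldType) (A : 'M[F]_(3, 3 + 3)) : Prop :=
  \rank A = 3%N /\
  forall u v : 'rV[F]_(3 + 3), (u <= A)%MS -> (v <= A)%MS -> symform u v = 0.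

Definition Pi1 (F : fieldType) : 'M[F]_(3, 3 + 3) := row_mx 0 1%:M.
Definition Pi2 (F : fieldType) : 'M[F]_(3, 3 + 3) := row_mx 1%:M 0.

Definition disjoint_planes (F : fieldType) (A B : 'M[F]_(3, 3 + 3)) : Prop :=
  \rank (A :&: B)%MS = 0%N.

(* Standard Segre variety Sigma_{1,2}: image of ((x1,x2),(y1,y2,y3)) under
   (x_i y_j), coordinates ordered (x1y1,x1y2,x1y3,x2y1,x2y2,x2y3).
   For fixed x = (x1,x2) the points x (x) y form the plane spanned by the
   rows of [x1 I3 | x2 I3].  A Segre variety Sigma_{1,2} of PG(5,q) is the
   image of the standard one under a projectivity given by an invertible
   matrix M (acting on row vectors on the right); its plane ruling consists
   of the planes  [x1 I3 | x2 I3] M,  x in F^2 \ {0}. *)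
Definition segre_plane (F : fieldType) (M : 'M[F]_(3 + 3)) (x : 'rV[F]_2)
  : 'M[F]_(3, 3 + 3) :=
  row_mx ((x 0 0)%:M) ((x 0 1)%:M) *m M.

Definition in_segre_ruling (F : fieldType) (M : 'M[F]_(3 + 3))
  (A : 'M[F]_(3, 3 + 3)) : Prop :=
  exists x : 'rV[F]_2, x != 0 /\ (A == segre_plane M x)%MS.

From HB Require Import structures.
From mathcomp Require Import all_boot all_order all_algebra all_field.
From mathcomp Require Import ring.

Set Implicit Arguments.
Unset Strict Implicit.
Unset Printing Implicit Defensive.

Import GRing.Theory.
Local Open Scope ring_scope.

(* Writing U and D for the upper and lower halves of M, the plane of the ruling
   with parameter x is x0 U + x1 D, so its Gram matrix for the symplectic form
   is G(x0 U + x1 D) = x0^2 G(U) + x0 x1 C + x1^2 G(D), a binary quadratic form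
   in x with matrix coefficients.  It vanishes at the parameters of Pi1, Pi2
   and Pi3, which are pairwise non-proportional because these planes are
   pairwise distinct, and a binary quadratic form with three non-proportional
   zeros is identically zero. *)

Section Gram.

Variable F : fieldType.

Definition gram m (X : 'M[F]_(m, 3 + 3)) : 'M[F]_m := X *m symJ F *m X^T.

Lemma symform_mulmx m (X : 'M[F]_(m, 3 + 3)) (w w' : 'rV[F]_m) :
  symform (w *m X) (w' *m X) = (w *m gram X *m w'^T) 0 0.
Proof. by rewrite /symform /gram trmx_mul !mulmxA. Qed.

Lemma gram_coef m (X : 'M[F]_(m, 3 + 3)) i j :
  gram X i j = symform (row i X) (row j X).
Proof.
rewrite /gram /symform !mxE; apply: eq_bigr => k _; rewrite !mxE.
by congr (_ * _); apply: eq_bigr => l _; rewrite !mxE.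
Qed.

Lemma gram_eq0P m (X : 'M[F]_(m, 3 + 3)) :
  (forall u v : 'rV[F]_(3 + 3), (u <= X)%MS -> (v <= X)%MS -> symform u v = 0)
  <-> gram X = 0.
Proof.
split=> [iso | gX0 _ _ /submxP[w ->] /submxP[w' ->]].
  apply/matrixP => i j; rewrite gram_coef mxE iso //; exact: row_sub.
by rewrite symform_mulmx gX0 mulmx0 mul0mx mxE.
Qed.

Lemma is_generatorE (X : 'M[F]_(3, 3 + 3)) :
  is_generator X <-> \rank X = 3%N /\ gram X = 0.
Proof. by rewrite /is_generator gram_eq0P. Qed.

Lemma gram_submx m n (X : 'M[F]_(m, 3 + 3)) (Y : 'M[F]_(n, 3 + 3)) :
  (Y <= X)%MS -> gram X = 0 -> gram Y = 0.
Proof.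
move=> sYX /gram_eq0P isoX; apply/gram_eq0P => u v uY vY.
by apply: isoX; apply: submx_trans sYX.
Qed.

Lemma gram_lincomb m (A B : 'M[F]_(m, 3 + 3)) (s t : F) :
  gram (s *: A + t *: B) = s ^+ 2 *: gram A
    + (s * t) *: (A *m symJ F *m B^T + B *m symJ F *m A^T) + t ^+ 2 *: gram B.
Proof.
rewrite /gram linearD /= !linearZ /= mulmxDl !mulmxDr -!scalemxAl !mulmxDl.
rewrite -!scalemxAl -!scalemxAr !scalerA scalerDr !expr2 [t * s]mulrC.
by rewrite !addrA; congr (_ + _); rewrite addrAC.
Qed.

Lemma gram_Pi1 : gram (Pi1 F) = 0.
Proof.
by rewrite /gram /Pi1 /symJ mul_row_block tr_row_mx mul_row_col trmx0
  !(mul0mx, mulmx0, add0r).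
Qed.

Lemma gram_Pi2 : gram (Pi2 F) = 0.
Proof.
by rewrite /gram /Pi2 /symJ mul_row_block tr_row_mx mul_row_col trmx0
  !(mul0mx, mulmx0, addr0).
Qed.

End Gram.

Section BinaryForms.

Variable F : fieldType.

Definition det2 (a b : 'rV[F]_2) : F := a 0 0 * b 0 1 - a 0 1 * b 0 0.

Lemma ord2_cases (j : 'I_2) : j = 0 \/ j = 1.
Proof. by case: j => -[|[|//]] lt_j2; [left | right]; apply: val_inj. Qed.

Lemma rV2_neq0 (x : 'rV[F]_2) : x != 0 -> x 0 0 != 0 \/ x 0 1 != 0.
Proof.
move=> x_neq0; apply/orP; rewrite -negb_and; apply: contra x_neq0.
case/andP=> /eqP x0 /eqP x1; apply/eqP/rowP => j; rewrite mxE.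
by case: (ord2_cases j) => ->.
Qed.

Lemma det2_eq0_scale (a b : 'rV[F]_2) :
  b != 0 -> det2 a b = 0 -> exists k, a = k *: b.
Proof.
move=> b_neq0 /eqP; rewrite subr_eq0 => /eqP ab.
have entryE k : (forall j, a 0 j = k * b 0 j) -> a = k *: b.
  by move=> Ek; apply/rowP => j; rewrite mxE Ek.
have [b0 | b1] := rV2_neq0 b_neq0.
  exists (a 0 0 / b 0 0); apply: entryE => j.
  apply: (mulIf b0); rewrite mulrAC divfK //.
  by case: (ord2_cases j) => ->; rewrite ?ab.
exists (a 0 1 / b 0 1); apply: entryE => j.
apply: (mulIf b1); rewrite mulrAC divfK //.
by case: (ord2_cases j) => ->; rewrite ?ab.
Qed.

(* Cramer's rule: the linear system for (p, r, s) given by the three zeros has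
   determinant  det(a, b) det(a, c) det(b, c)  up to sign. *)
Lemma binary_quadratic_eq0 (p r s a0 a1 b0 b1 c0 c1 : F) :
  a0 * b1 - a1 * b0 != 0 -> a0 * c1 - a1 * c0 != 0 -> b0 * c1 - b1 * c0 != 0 ->
  a0 ^+ 2 * p + (a0 * a1) * r + a1 ^+ 2 * s = 0 ->
  b0 ^+ 2 * p + (b0 * b1) * r + b1 ^+ 2 * s = 0 ->
  c0 ^+ 2 * p + (c0 * c1) * r + c1 ^+ 2 * s = 0 ->
  [/\ p = 0, r = 0 & s = 0].
Proof.
move=> dab dac dbc qa qb qc.
set Dt := (a0 * b1 - a1 * b0) * (a0 * c1 - a1 * c0) * (b0 * c1 - b1 * c0).
have Dt_neq0 : Dt != 0 by rewrite !mulf_neq0.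
set A1 := a0 ^+ 2; set A2 := a0 * a1; set A3 := a1 ^+ 2.
set B1 := b0 ^+ 2; set B2 := b0 * b1; set B3 := b1 ^+ 2.
set C1 := c0 ^+ 2; set C2 := c0 * c1; set C3 := c1 ^+ 2.
have Ep : p * Dt = (B2 * C3 - B3 * C2) * (A1 * p + A2 * r + A3 * s)
  - (A2 * C3 - A3 * C2) * (B1 * p + B2 * r + B3 * s)
  + (A2 * B3 - A3 * B2) * (C1 * p + C2 * r + C3 * s)
  by rewrite /Dt /A1 /A2 /A3 /B1 /B2 /B3 /C1 /C2 /C3; ring.
have Er : r * Dt = - (B1 * C3 - B3 * C1) * (A1 * p + A2 * r + A3 * s)
  + (A1 * C3 - A3 * C1) * (B1 * p + B2 * r + B3 * s)
  - (A1 * B3 - A3 * B1) * (C1 * p + C2 * r + C3 * s)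
  by rewrite /Dt /A1 /A2 /A3 /B1 /B2 /B3 /C1 /C2 /C3; ring.
have Es : s * Dt = (B1 * C2 - B2 * C1) * (A1 * p + A2 * r + A3 * s)
  - (A1 * C2 - A2 * C1) * (B1 * p + B2 * r + B3 * s)
  + (A1 * B2 - A2 * B1) * (C1 * p + C2 * r + C3 * s)
  by rewrite /Dt /A1 /A2 /A3 /B1 /B2 /B3 /C1 /C2 /C3; ring.
rewrite qa qb qc !mulr0 subrr addr0 subr0 in Ep Er Es.
by split; apply/eqP; rewrite -(mulIr_eq0 _ (mulIf Dt_neq0)) ?Ep ?Er ?Es.
Qed.

Lemma binary_quadratic_mx_eq0 m n (P R S : 'M[F]_(m, n)) (a b c : 'rV[F]_2) :
  det2 a b != 0 -> det2 a c != 0 -> det2 b c != 0 ->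
  a 0 0 ^+ 2 *: P + (a 0 0 * a 0 1) *: R + a 0 1 ^+ 2 *: S = 0 ->
  b 0 0 ^+ 2 *: P + (b 0 0 * b 0 1) *: R + b 0 1 ^+ 2 *: S = 0 ->
  c 0 0 ^+ 2 *: P + (c 0 0 * c 0 1) *: R + c 0 1 ^+ 2 *: S = 0 ->
  [/\ P = 0, R = 0 & S = 0].
Proof.
move=> dab dac dbc /matrixP qa /matrixP qb /matrixP qc.
have coefs_eq0 i j : [/\ P i j = 0, R i j = 0 & S i j = 0].
  move: (qa i j) (qb i j) (qc i j); rewrite !mxE; exact: binary_quadratic_eq0.
by split; apply/matrixP => i j; rewrite mxE; case: (coefs_eq0 i j).
Qed.

End BinaryForms.

Section SegreRuling.

Variables (F : fieldType) (M : 'M[F]_(3 + 3)).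

Lemma segre_planeE (x : 'rV[F]_2) :
  segre_plane M x = x 0 0 *: usubmx M + x 0 1 *: dsubmx M.
Proof.
by rewrite /segre_plane -[in LHS](vsubmxK M) mul_row_col !mul_scalar_mx.
Qed.

Lemma segre_planeZ (k : F) (x : 'rV[F]_2) :
  segre_plane M (k *: x) = k *: segre_plane M x.
Proof. by rewrite !segre_planeE !mxE scalerDr !scalerA. Qed.

Lemma segre_plane_sub (a b : 'rV[F]_2) :
  b != 0 -> det2 a b = 0 -> (segre_plane M a <= segre_plane M b)%MS.
Proof.
move=> b_neq0 /(det2_eq0_scale b_neq0)[k ->].
by rewrite segre_planeZ scalemx_sub.
Qed.

Lemma segre_ruling_det2_neq0 m n (A : 'M[F]_(m, 3 + 3)) (B : 'M[F]_(n, 3 + 3))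
    (a b : 'rV[F]_2) :
  (A <= segre_plane M a)%MS -> (segre_plane M b <= B)%MS -> b != 0 ->
  ~~ (A <= B)%MS -> det2 a b != 0.
Proof.
move=> sAa sbB b_neq0; apply: contra => /eqP ab0.
by rewrite (submx_trans sAa (submx_trans (segre_plane_sub b_neq0 ab0) sbB)).
Qed.

Lemma rank_segre_plane (x : 'rV[F]_2) :
  M \in unitmx -> x != 0 -> \rank (segre_plane M x) = 3%N.
Proof.
move=> uM x_neq0; rewrite /segre_plane mxrankMfree ?row_free_unit //.
apply/eqP/row_freeP; have [x0 | x1] := rV2_neq0 x_neq0.
  exists (col_mx (x 0 0)^-1%:M 0).
  by rewrite mul_row_col mulmx0 addr0 -scalar_mxM mulfV.
exists (col_mx 0 (x 0 1)^-1%:M).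
by rewrite mul_row_col mulmx0 add0r -scalar_mxM mulfV.
Qed.

End SegreRuling.

Lemma disjoint_planes_not_sub (F : fieldType) (A B : 'M[F]_(3, 3 + 3)) :
  disjoint_planes A B -> B != 0 -> ~~ (B <= A)%MS.
Proof.
move=> AB0 B_neq0; apply: contra B_neq0 => /capmx_idPr capAB.
by rewrite -mxrank_eq0 -capAB AB0.
Qed.

Lemma Pi1_neq0 (F : fieldType) : Pi1 F != 0.
Proof. by rewrite /Pi1 row_mx_eq0 negb_and matrix_nonzero1 orbT. Qed.

Lemma Pi2_neq0 (F : fieldType) : Pi2 F != 0.
Proof. by rewrite /Pi2 row_mx_eq0 negb_and matrix_nonzero1. Qed.

Lemma Pi1_not_sub_Pi2 (F : fieldType) : ~~ (Pi1 F <= Pi2 F)%MS.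
Proof.
apply/negP => /submxP[W]; rewrite /Pi1 /Pi2 mul_mx_row mulmx1 mulmx0.
by case/eq_row_mx => _ /eqP; apply/negP; exact: matrix_nonzero1.
Qed.

Theorem mainTheorem11 (F : finFieldType) (Pi3 : 'M[F]_(3, 3 + 3)) :
  is_generator Pi3 ->
  disjoint_planes Pi3 (Pi1 F) ->
  disjoint_planes Pi3 (Pi2 F) ->
  forall M : 'M[F]_(3 + 3), M \in unitmx ->
    in_segre_ruling M (Pi1 F) ->
    in_segre_ruling M (Pi2 F) ->
    in_segre_ruling M Pi3 ->
    forall x : 'rV[F]_2, x != 0 -> is_generator (segre_plane M x).
Proof.
move=> /is_generatorE[_ gram_Pi3] dis31 dis32 M uM
  [a [a_neq0 /andP[Pi1_a a_Pi1]]] [b [b_neq0 /andP[Pi2_b b_Pi2]]]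
  [c [c_neq0 /andP[Pi3_c c_Pi3]]] x x_neq0.
have gram_a := gram_submx a_Pi1 (gram_Pi1 F).
have gram_b := gram_submx b_Pi2 (gram_Pi2 F).
have gram_c := gram_submx c_Pi3 gram_Pi3.
rewrite !segre_planeE !gram_lincomb in gram_a gram_b gram_c.
have [|||gram_U gram_UD gram_D] :=
  binary_quadratic_mx_eq0 _ _ _ gram_a gram_b gram_c.
- exact: segre_ruling_det2_neq0 Pi1_a b_Pi2 b_neq0 (Pi1_not_sub_Pi2 F).
- apply: segre_ruling_det2_neq0 Pi1_a c_Pi3 c_neq0 _.
  exact: disjoint_planes_not_sub dis31 (Pi1_neq0 F).
- apply: segre_ruling_det2_neq0 Pi2_b c_Pi3 c_neq0 _.
  exact: disjoint_planes_not_sub dis32 (Pi2_neq0 F).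
apply/is_generatorE; split; first by rewrite (rank_segre_plane uM x_neq0).
by rewrite segre_planeE gram_lincomb gram_U gram_UD gram_D !scaler0 !addr0.
Qed.
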